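(* Let $G=(V,E)$ be an $S$-regular graph with cells $V_1,\dots,V_k$, $n_i=|V_i|$, and let $B,C\subseteq V$, with $B_i=B\cap V_i$, $C_j=C\cap V_j$. Then \[\Bigl|\,|E(B,C)|-\sum_{i=1}^k\sum_{j=1}^k\sqrt{\tfrac{s_{ij}s_{ji}}{n_in_j}}\,|B_i||C_j|\,\Bigr|\le\lambda_B\sqrt{|B||C|}.\]
   Context: All graphs are simple, undirected and connected. $G$ is $S$-regular ($S=(s_{ij})$ a $k\times k$ nonnegative integer matrix) if $V$ is partitioned into nonempty cells $V_1,\dots,V_k$ such that every vertex of $V_i$ has exactly $s_{ij}$ neighbours in $V_j$. $|E(B,C)|$ denotes the number of pairs $(u,v)\in B\times C$ with $uv\in E$ (i.e. $\mathbf{1}_B^TA\mathbf{1}_C$, $A$ the adjacency matrix). The subspace $W=\mathrm{span}\{\mathbf{1}_{V_1},\dots,\mathbf{1}_{V_k}\}$ is $A$-invariant with eigenvalues on $W$ equal to those of $S$; the eigenvalues of $A$ on $W^\perp$ are the bulk eigenvalues (assume $|V|>k$), and $\lambda_B$ is the largest absolute value of a bulk eigenvalue. *)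

From HB Require Import structures.
From mathcomp Require Import all_boot all_order all_algebra.
Set Implicit Arguments. Unset Strict Implicit. Unset Printing Implicit Defensive.
Import Order.TTheory GRing.Theory Num.Theory.
Local Open Scope ring_scope.

Definition simple_graph (n : nat) (adj : rel 'I_n) : Prop :=
  symmetric adj /\ irreflexive adj.

Definition connected_graph (n : nat) (adj : rel 'I_n) : Prop :=
  forall u v : 'I_n, connect adj u v.

Definition cellset (n k : nat) (cell : 'I_n -> 'I_k) (i : 'I_k) : {set 'I_n} :=
  [set v | cell v == i].

Definition S_regular (n k : nat) (adj : rel 'I_n) (cell : 'I_n -> 'I_k)
    (S : 'I_k -> 'I_k -> nat) : Prop :=
  (forall i : 'I_k, cellset cell i != set0) /\
  (forall (v : 'I_n) (j : 'I_k),
      #|[set w | adj v w & w \in cellset cell j]| = S (cell v) j).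

Definition adjmx (R : nzRingType) (n : nat) (adj : rel 'I_n) : 'M[R]_n :=
  \matrix_(u < n, v < n) (adj u v)%:R.

Definition indic (R : nzRingType) (n : nat) (X : {set 'I_n}) : 'cV[R]_n :=
  \col_(v < n) (v \in X)%:R.

Definition in_Wperp (R : nzRingType) (n k : nat) (cell : 'I_n -> 'I_k)
    (x : 'cV[R]_n) : Prop :=
  forall i : 'I_k, (indic R (cellset cell i))^T *m x = 0.

Definition bulk_eigenvalue (R : nzRingType) (n k : nat) (adj : rel 'I_n)
    (cell : 'I_n -> 'I_k) (mu : R) : Prop :=
  exists2 x : 'cV[R]_n, x != 0 /\ in_Wperp cell x &
    adjmx R adj *m x = mu *: x.

Definition is_lambda_B (R : numDomainType) (n k : nat) (adj : rel 'I_n)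
    (cell : 'I_n -> 'I_k) (lam : R) : Prop :=
  (exists2 mu : R, bulk_eigenvalue adj cell mu & `|mu| = lam) /\
  (forall mu : R, bulk_eigenvalue adj cell mu -> `|mu| <= lam).

(* |E(B,C)| = number of ordered pairs (u,v) in B x C with uv an edge. *)
Definition EBC (n : nat) (adj : rel 'I_n) (B C : {set 'I_n}) : nat :=
  #|[set p : 'I_n * 'I_n | [&& p.1 \in B, p.2 \in C & adj p.1 p.2]]|.

From HB Require Import structures.
From mathcomp Require Import all_boot all_order all_algebra.
From mathcomp Require Import complex ring lra.
Set Implicit Arguments. Unset Strict Implicit. Unset Printing Implicit Defensive.
Import Order.TTheory GRing.Theory Num.Theory.
Local Open Scope ring_scope.

(* Split the indicator 1_X as b_X + p_X, where p_X is its average on each cell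
   (the orthogonal projection onto W) and b_X lies in W^perp.  Since A W ⊆ W
   and A is symmetric, W^perp is A-invariant and the cross terms vanish:
   |E(B,C)| = b_B^T A b_C + p_B^T A p_C.  The second term is the double sum,
   because n_i s_ij = n_j s_ji (both count the edges between V_i and V_j).
   For the first, a real symmetric matrix has a real eigenvector in every
   nonzero invariant subspace; splitting it off and inducting on the dimension
   bounds the quadratic form on W^perp by lambda_B |x|^2, and polarization turns
   this into |b_B^T A b_C| <= lambda_B |b_B| |b_C| <= lambda_B sqrt(|B| |C|). *)

Definition mxform (R : comPzRingType) n (M : 'M[R]_n) (u v : 'rV[R]_n) : R :=
  (u *m M *m v^T) 0 0.

Section MxForm.
Variables (R : comPzRingType) (n : nat).
Implicit Types (M : 'M[R]_n) (u v w : 'rV[R]_n).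

Lemma mxform0l M v : mxform M 0 v = 0.
Proof. by rewrite /mxform !mul0mx mxE. Qed.

Lemma mxform0r M u : mxform M u 0 = 0.
Proof. by rewrite /mxform trmx0 mulmx0 mxE. Qed.

Lemma mxformDl M u v w : mxform M (u + v) w = mxform M u w + mxform M v w.
Proof. by rewrite /mxform !mulmxDl mxE. Qed.

Lemma mxformDr M u v w : mxform M u (v + w) = mxform M u v + mxform M u w.
Proof. by rewrite /mxform linearD /= mulmxDr mxE. Qed.

Lemma mxformZl M a u v : mxform M (a *: u) v = a * mxform M u v.
Proof. by rewrite /mxform -!scalemxAl mxE. Qed.

Lemma mxformZr M a u v : mxform M u (a *: v) = a * mxform M u v.
Proof. by rewrite /mxform linearZ /= -scalemxAr mxE. Qed.

Lemma mxformNl M u v : mxform M (- u) v = - mxform M u v.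
Proof. by rewrite -scaleN1r mxformZl mulN1r. Qed.

Lemma mxformNr M u v : mxform M u (- v) = - mxform M u v.
Proof. by rewrite -scaleN1r mxformZr mulN1r. Qed.

Lemma mxformC M u v : M^T = M -> mxform M u v = mxform M v u.
Proof.
move=> sM; rewrite /mxform; have -> : v *m M *m u^T = (u *m M *m v^T)^T.
  by rewrite !trmx_mul trmxK sM mulmxA.
by rewrite [in RHS]mxE.
Qed.

Lemma mxformE M u v :
  mxform M u v = \sum_i \sum_j u 0 i * M i j * v 0 j.
Proof.
rewrite /mxform mxE exchange_big; apply: eq_bigr => j _.
by rewrite mxE mulr_suml; apply: eq_bigr => i _; rewrite !mxE.
Qed.

Lemma mxform_mulmx m M (P : 'M[R]_(m, n)) (u v : 'rV[R]_m) :
  mxform M (u *m P) (v *m P) = mxform (P *m M *m P^T) u v.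
Proof. by rewrite /mxform trmx_mul !mulmxA. Qed.

Lemma mxform_eigenl M mu u v :
  u *m M = mu *: u -> mxform M u v = mu * mxform 1%:M u v.
Proof. by rewrite /mxform mulmx1 => ->; rewrite -scalemxAl mxE. Qed.

Lemma mxform_ker_range k M (W : 'M[R]_(n, k)) (N : 'M[R]_k) u
    (p : 'rV[R]_k) :
  M *m W = W *m N -> u *m W = 0 -> mxform M u (p *m W^T) = 0.
Proof.
move=> MW uW; rewrite /mxform trmx_mul trmxK !mulmxA -(mulmxA u) MW.
by rewrite mulmxA uW !mul0mx mxE.
Qed.

Lemma mxform1D_orth u v : mxform 1%:M u v = 0 ->
  mxform 1%:M (u + v) (u + v) = mxform 1%:M u u + mxform 1%:M v v.
Proof.
move=> uv; rewrite !mxformDl !mxformDr (mxformC v u (trmx1 _ _)) uv.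
by rewrite addr0 add0r.
Qed.

Lemma mxform_add_eigen M mu u v a : M^T = M ->
  mxform 1%:M u v = 0 -> v *m M = mu *: v ->
  mxform M (u + a *: v) (u + a *: v) =
  mxform M u u + a ^+ 2 * mu * mxform 1%:M v v.
Proof.
move=> sM uv vM; have Mvu : mxform M v u = 0.
  by rewrite (mxform_eigenl _ vM) (mxformC v u (trmx1 _ _)) uv mulr0.
rewrite !mxformDl !mxformDr !mxformZl !mxformZr (mxformC u v sM) Mvu.
by rewrite (mxform_eigenl _ vM); ring.
Qed.

Lemma mxform_ker_range_split k M (W : 'M[R]_(n, k)) (N : 'M[R]_k) u u'
    (p p' : 'rV[R]_k) :
  M^T = M -> M *m W = W *m N -> u *m W = 0 -> u' *m W = 0 ->
  mxform M (u + p *m W^T) (u' + p' *m W^T) =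
  mxform M u u' + mxform M (p *m W^T) (p' *m W^T).
Proof.
move=> sM MW uW u'W; rewrite !mxformDl !mxformDr (mxformC (p *m W^T) u' sM).
rewrite (mxform_ker_range _ MW uW) (mxform_ker_range _ MW u'W).
by rewrite [_ + 0]addr0 add0r.
Qed.

End MxForm.

Section MxFormReal.
Variables (R : realDomainType) (n : nat).
Implicit Types (u : 'rV[R]_n).

Lemma mxform1E u : mxform 1%:M u u = \sum_i u 0 i ^+ 2.
Proof. by rewrite /mxform mulmx1 mxE; apply: eq_bigr => i _; rewrite mxE. Qed.

Lemma mxform1_ge0 u : 0 <= mxform 1%:M u u.
Proof. by rewrite mxform1E sumr_ge0 // => i _; rewrite sqr_ge0. Qed.

Lemma mxform1_eq0 u : (mxform 1%:M u u == 0) = (u == 0).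
Proof.
apply/eqP/eqP => [|->]; last exact: mxform0l.
rewrite mxform1E => /psumr_eq0P u0; apply/rowP => i; rewrite mxE.
by apply/eqP; rewrite -sqrf_eq0 u0 // => j _; rewrite sqr_ge0.
Qed.

End MxFormReal.

Lemma realsym_eigenvalue_real (R : rcfType) n (A : 'M[R]_n) (z : R[i]) :
  A^T = A -> eigenvalue (map_mx (real_complex R) A) z -> z \is Num.real.
Proof.
move=> symA /eigenvalueP [w wA w_neq0].
(* w A w^* = z |w|^2 is its own conjugate and |w|^2 > 0. *)
set Ac := map_mx (real_complex R) A.
have Ac_herm : (Ac ^t* = Ac)%sesqui.
  by apply/matrixP => i j; rewrite !mxE -[in RHS]symA mxE; exact: conjc_real.
have w_gt0 : 0 < dotmx w w by rewrite dotmx_is_dotmx.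
have wAw : (w *m Ac *m w ^t*)%sesqui 0 0 = z * dotmx w w.
  by rewrite wA -scalemxAl mxE dotmxE.
have wAw_self :
    ((w *m Ac *m w ^t*) ^t*)%sesqui 0 0 = (w *m Ac *m w ^t*)%sesqui 0 0.
  rewrite !trmx_mul !map_mxM mulmxA.
  by congr ((_ *m _ *m _) 0 0); [exact: trmxCK | exact: Ac_herm].
move: wAw_self; rewrite [LHS]mxE [_^T _ _]mxE wAw rmorphM /=.
rewrite (CrealP (gtr0_real w_gt0)).
by move/(mulIf (lt0r_neq0 w_gt0))/CrealP.
Qed.

Lemma sym_stable_eigenvector (R : rcfType) n m (A : 'M[R]_n)
    (U : 'M[R]_(m, n)) :
  A^T = A -> stablemx U A -> \rank U != 0%N ->
  exists mu, exists2 v : 'rV_n, (v != 0) && (v <= U)%MS & v *m A = mu *: v.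
Proof.
move=> symA sUA rU; set toC := real_complex R.
set M := restrictmx U A.
have sBA : stablemx (row_base U) A by rewrite stablemx_row_base.
have [z zM] : exists z, eigenvalue (map_mx toC M) z.
  by apply: eigenvalue_closed; rewrite lt0n.
have zA : eigenvalue (map_mx toC A) z.
  apply: (@eigenvalue_conjmx _ _ _ (map_mx toC (row_base U))).
  - by rewrite -map_mxM map_submx.
  - by rewrite row_free_map row_base_free.
  - by rewrite /conjmx -map_pinvmx -!map_mxM.
have /complex_realP [a za] := realsym_eigenvalue_real symA zA.
rewrite za eigenvalue_map in zM.
have [u uM u_neq0] := eigenvalueP zM.
have BA : row_base U *m A = M *m row_base U by rewrite mulmxKpV.
exists a, (u *m row_base U); last by rewrite -mulmxA BA mulmxA uM scalemxAl.
rewrite mulmx_free_eq0 ?row_base_free // u_neq0 /=.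
by rewrite (submx_trans (submxMl _ _)) ?eq_row_base.
Qed.

Section SymmetricStable.
Variables (R : rcfType) (n : nat) (A : 'M[R]_n).
Hypothesis symA : A^T = A.
Implicit Types (x y v : 'rV[R]_n).

Lemma sub_kermx_trE y v : (y <= kermx v^T)%MS = (mxform 1%:M y v == 0).
Proof.
rewrite sub_kermx /mxform mulmx1.
apply/eqP/eqP => [->|yv0]; first by rewrite mxE.
by apply/rowP => i; rewrite ord1 yv0 mxE.
Qed.

Lemma stablemx_cap_kermx_eigen m (U : 'M[R]_(m, n)) mu v :
  stablemx U A -> v *m A = mu *: v -> stablemx (U :&: kermx v^T)%MS A.
Proof.
move=> sUA vA.
have Av : A *m v^T = mu *: v^T by rewrite -symA -trmx_mul vA linearZ.
rewrite sub_capmx (submx_trans (submxMr _ (capmxSl _ _)) sUA) /=.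
apply/sub_kermxP; rewrite -mulmxA Av -scalemxAr.
by move/sub_kermxP: (capmxSr U (kermx v^T)) => ->; rewrite scaler0.
Qed.

Lemma rank_cap_kermx_lt m (U : 'M[R]_(m, n)) v :
  v != 0 -> (v <= U)%MS -> (\rank (U :&: kermx v^T) < \rank U)%N.
Proof.
move=> v_neq0 vU; apply: rank_ltmx; rewrite ltmxEneq capmxSl /=.
apply: contra v_neq0 => /(submx_trans vU)/(submx_trans)/(_ (capmxSr _ _)).
by rewrite sub_kermx_trE mxform1_eq0.
Qed.

Lemma sub_cap_kermx_proj m (U : 'M[R]_(m, n)) x v : v != 0 ->
  (x <= U)%MS -> (v <= U)%MS ->
  (x - (mxform 1%:M x v / mxform 1%:M v v) *: v <= U :&: kermx v^T)%MS.
Proof.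
move=> v_neq0 xU vU; rewrite sub_capmx addmx_sub ?eqmx_opp ?scalemx_sub //=.
by rewrite sub_kermx_trE mxformDl mxformNl mxformZl divfK ?subrr ?mxform1_eq0.
Qed.

Lemma sym_stable_quadform_bound (L : R) m (U : 'M[R]_(m, n)) :
  stablemx U A ->
  (forall mu v, v != 0 -> (v <= U)%MS -> v *m A = mu *: v -> `|mu| <= L) ->
  forall x, (x <= U)%MS -> `|mxform A x x| <= L * mxform 1%:M x x.
Proof.
have [r] := ubnP (\rank U); elim: r m U => // r IH m U rU sUA eigU x xU.
have [U0|/(sym_stable_eigenvector symA sUA)] := eqVneq (\rank U) 0%N.
  have /eqP -> : x == 0.
    by rewrite -submx0 (submx_trans xU) // submx0 -mxrank_eq0 U0.
  by rewrite mxform0l normr0 mxform0l mulr0.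
move=> [mu [v /andP [v_neq0 vU] vA]].
set a := mxform 1%:M x v / mxform 1%:M v v.
have yU' := sub_cap_kermx_proj v_neq0 xU vU; rewrite -/a in yU'.
have yv : mxform 1%:M (x - a *: v) v = 0.
  by apply/eqP; rewrite -sub_kermx_trE (submx_trans yU' (capmxSr _ _)).
have eigU' mu' (w : 'rV_n) : w != 0 -> (w <= U :&: kermx v^T)%MS ->
    w *m A = mu' *: w -> `|mu'| <= L.
  by move=> w_neq0 wU'; apply: eigU w_neq0 (submx_trans wU' (capmxSl _ _)).
have IHy := IH _ _ (leq_trans (rank_cap_kermx_lt v_neq0 vU) rU)
  (stablemx_cap_kermx_eigen sUA vA) eigU' _ yU'.
have mu_le := eigU mu v v_neq0 vU vA.
rewrite -(subrK (a *: v) x) (mxform_add_eigen _ symA yv vA).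
rewrite mxform1D_orth; last by rewrite mxformZr yv mulr0.
rewrite mxformZl mxformZr mulrA -expr2 mulrDr.
rewrite (le_trans (ler_normD _ _)) // lerD //.
rewrite normrM (ger0_norm (mxform1_ge0 _)).
rewrite normrM (ger0_norm (sqr_ge0 a)) mulrCA -mulrA.
by rewrite ler_wpM2l ?sqr_ge0 // ler_wpM2r ?mxform1_ge0.
Qed.

Lemma sym_form_amgm_bound (L : R) m (U : 'M[R]_(m, n)) :
  (forall x, (x <= U)%MS -> `|mxform A x x| <= L * mxform 1%:M x x) ->
  forall x y, (x <= U)%MS -> (y <= U)%MS ->
  2 * `|mxform A x y| <= L * (mxform 1%:M x x + mxform 1%:M y y).
Proof.
move=> quadU x y xU yU; have yNU : (- y <= U)%MS by rewrite eqmx_opp.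
have polar : 4 * mxform A x y =
    mxform A (x + y) (x + y) - mxform A (x - y) (x - y).
  by rewrite !mxformDl !mxformDr !mxformNl !mxformNr (mxformC y x symA); ring.
have parallelogram :
    mxform 1%:M (x + y) (x + y) + mxform 1%:M (x - y) (x - y) =
    2 * (mxform 1%:M x x + mxform 1%:M y y).
  rewrite !mxformDl !mxformDr !mxformNl !mxformNr (mxformC y x (trmx1 _ _)).
  by ring.
have := ler_normB (mxform A (x + y) (x + y)) (mxform A (x - y) (x - y)).
rewrite -polar normrM ger0_norm //.
have := lerD (quadU _ (addmx_sub xU yU)) (quadU _ (addmx_sub xU yNU)).
rewrite -mulrDr parallelogram; lra.
Qed.

Lemma sym_form_polar_bound (L : R) m (U : 'M[R]_(m, n)) :
  (forall x, (x <= U)%MS -> `|mxform A x x| <= L * mxform 1%:M x x) ->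
  forall x y, (x <= U)%MS -> (y <= U)%MS ->
  `|mxform A x y| <=
  L * Num.sqrt (mxform 1%:M x x) * Num.sqrt (mxform 1%:M y y).
Proof.
move=> quadU x y xU yU.
have [-> | x_neq0] := eqVneq x 0.
  by rewrite mxform0l normr0 mxform0l sqrtr0 mulr0 mul0r.
have [-> | y_neq0] := eqVneq y 0.
  by rewrite mxform0r normr0 mxform0r sqrtr0 mulr0.
have norm_gt0 (u : 'rV[R]_n) : u != 0 -> 0 < Num.sqrt (mxform 1%:M u u).
  by move=> u_neq0; rewrite sqrtr_gt0 lt_def mxform1_eq0 u_neq0 mxform1_ge0.
have sqr_norm (u : 'rV[R]_n) :
    mxform 1%:M u u = Num.sqrt (mxform 1%:M u u) ^+ 2.
  by rewrite sqr_sqrtr ?mxform1_ge0.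
move: (norm_gt0 x x_neq0) (norm_gt0 y y_neq0) (sqr_norm x) (sqr_norm y).
set p := Num.sqrt _; set q := Num.sqrt _ => p_gt0 q_gt0 xxE yyE.
(* Rescaling x by |y| and y by |x| balances the two sides of the AM-GM bound. *)
have := sym_form_amgm_bound quadU (scalemx_sub q xU) (scalemx_sub p yU).
rewrite !mxformZl !mxformZr xxE yyE !normrM.
rewrite (ger0_norm (ltW p_gt0)) (ger0_norm (ltW q_gt0)).
have -> : L * (q * (q * p ^+ 2) + p * (p * q ^+ 2)) =
    2 * (q * (p * (L * p * q))) by ring.
by rewrite !ler_pM2l.
Qed.

End SymmetricStable.

Lemma natr_card (R : nzSemiRingType) (T : finType) (A : {pred T}) :
  (#|A|%:R : R) = \sum_x (x \in A)%:R.
Proof.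
by rewrite -sumr_const big_mkcond; apply: eq_bigr => x _; case: (x \in A).
Qed.

Section EquitablePartition.
Variables (R : rcfType) (n k : nat) (adj : rel 'I_n) (cell : 'I_n -> 'I_k).
Variable S : 'I_k -> 'I_k -> nat.
Hypothesis adj_sym : symmetric adj.
Hypothesis cell_neq0 : forall i, cellset cell i != set0.
Hypothesis cell_degree :
  forall v j, #|[set w | adj v w & w \in cellset cell j]| = S (cell v) j.

Local Notation A := (adjmx R adj).
Local Notation V := (cellset cell).
Implicit Types (X B C : {set 'I_n}).

Definition cellmx : 'M[R]_(n, k) := \matrix_(v, i) (cell v == i)%:R.
Definition quotmx : 'M[R]_k := \matrix_(i, j) (S i j)%:R.
Definition cellavg X : 'rV[R]_k := \row_i (#|X :&: V i|%:R / #|V i|%:R).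
Definition cellproj X : 'rV[R]_n := cellavg X *m cellmx^T.
Definition bulkpart X : 'rV[R]_n := (indic R X)^T - cellproj X.

Lemma card_cell_neq0 i : #|V i|%:R != 0 :> R.
Proof. by rewrite pnatr_eq0 -lt0n card_gt0 cell_neq0. Qed.

Lemma adjmx_sym : A^T = A.
Proof. by apply/matrixP => u v; rewrite !mxE adj_sym. Qed.

Lemma cellmx_mul p (M : 'M[R]_(k, p)) v j :
  (cellmx *m M) v j = M (cell v) j.
Proof.
rewrite mxE (bigD1 (cell v)) //= mxE eqxx mul1r big1 ?addr0 // => i.
by rewrite mxE eq_sym => /negbTE ->; rewrite mul0r.
Qed.

Lemma trmx_cellmx_mul p (M : 'M[R]_(n, p)) i j :
  (cellmx^T *m M) i j = \sum_(v in V i) M v j.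
Proof.
rewrite mxE [RHS]big_mkcond; apply: eq_bigr => v _.
by rewrite !mxE inE; case: (cell v == i); rewrite ?mul1r ?mul0r.
Qed.

Lemma adjmx_cellmx : A *m cellmx = cellmx *m quotmx.
Proof.
apply/matrixP => v j; rewrite cellmx_mul [RHS]mxE -cell_degree natr_card mxE.
by apply: eq_bigr => w _; rewrite !mxE !inE -natrM mulnb.
Qed.

Lemma cellmx_gram : cellmx^T *m cellmx = diag_mx (\row_i #|V i|%:R).
Proof.
apply/matrixP => i j; rewrite trmx_cellmx_mul !mxE.
rewrite (eq_bigr (fun=> (i == j)%:R)) => [|v /[!inE] /eqP <-].
  by rewrite sumr_const; case: (i == j); rewrite ?mul0rn.
by rewrite mxE.
Qed.

Lemma cell_balance i j : (#|V i| * S i j = #|V j| * S j i)%N.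
Proof.
have G : cellmx^T *m A *m cellmx = diag_mx (\row_i #|V i|%:R) *m quotmx.
  by rewrite -mulmxA adjmx_cellmx mulmxA cellmx_gram.
have /matrixP/(_ i j) : (cellmx^T *m A *m cellmx)^T = cellmx^T *m A *m cellmx.
  by rewrite !trmx_mul trmxK adjmx_sym mulmxA.
by rewrite G mul_diag_mx !mxE -!natrM => /eqP; rewrite eqr_nat => /eqP.
Qed.

Lemma cell_weight_sqrt i j :
  Num.sqrt ((S i j * S j i)%:R / (#|V i| * #|V j|)%:R) =
  (S i j)%:R / #|V j|%:R :> R.
Proof.
have Sji : (S j i)%:R = #|V i|%:R * (S i j)%:R / #|V j|%:R :> R.
  by rewrite -natrM cell_balance natrM mulrAC divff ?mul1r ?card_cell_neq0.
have -> : (S i j * S j i)%:R / (#|V i| * #|V j|)%:R =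
    ((S i j)%:R / #|V j|%:R) ^+ 2 :> R.
  by rewrite !natrM Sji; field; rewrite ?card_cell_neq0.
by rewrite sqrtr_sqr ger0_norm ?divr_ge0.
Qed.

Lemma indic_cellmx X : (indic R X)^T *m cellmx = \row_j #|X :&: V j|%:R.
Proof.
apply/rowP => j; rewrite !mxE natr_card; apply: eq_bigr => v _.
by rewrite !mxE !inE -natrM mulnb.
Qed.

Lemma cellproj_cellmx X : cellproj X *m cellmx = \row_j #|X :&: V j|%:R.
Proof.
apply/rowP => j; rewrite -mulmxA cellmx_gram mul_mx_diag !mxE.
by rewrite divfK ?card_cell_neq0.
Qed.

Lemma bulkpart_cellmx X : bulkpart X *m cellmx = 0.
Proof. by rewrite mulmxBl indic_cellmx cellproj_cellmx subrr. Qed.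

Lemma stablemx_kermx_cellmx : stablemx (kermx cellmx) A.
Proof.
by apply/sub_kermxP; rewrite -mulmxA adjmx_cellmx mulmxA mulmx_ker mul0mx.
Qed.

Lemma kermx_cellmx_bulk_eigenvalue mu (v : 'rV[R]_n) :
  v != 0 -> (v <= kermx cellmx)%MS -> v *m A = mu *: v ->
  bulk_eigenvalue adj cell mu.
Proof.
move=> v_neq0 /sub_kermxP vW vA; exists v^T.
  split=> [|i]; first by rewrite trmx_eq0.
  apply/rowP => j; rewrite ord1; transitivity ((v *m cellmx) 0 i).
    by rewrite !mxE; apply: eq_bigr => u _; rewrite !mxE inE mulrC.
  by rewrite vW !mxE.
by rewrite -adjmx_sym -trmx_mul vA linearZ.
Qed.

Lemma mxform_indic X : mxform 1%:M (indic R X)^T (indic R X)^T = #|X|%:R.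
Proof.
rewrite mxform1E natr_card; apply: eq_bigr => v _.
by rewrite !mxE; case: (v \in X); rewrite ?expr0n ?expr1n.
Qed.

Lemma indic_bulkpart X : (indic R X)^T = bulkpart X + cellproj X.
Proof. by rewrite subrK. Qed.

Lemma mxform_bulkpart_le X :
  mxform 1%:M (bulkpart X) (bulkpart X) <= #|X|%:R.
Proof.
have W1 : 1%:M *m cellmx = cellmx *m 1%:M by rewrite mul1mx mulmx1.
have bX := bulkpart_cellmx X.
rewrite -mxform_indic indic_bulkpart.
rewrite (mxform_ker_range_split _ _ (trmx1 _ _) W1 bX bX).
by rewrite lerDl mxform1_ge0.
Qed.

Lemma EBC_mxform B C :
  (EBC adj B C)%:R = mxform A (indic R B)^T (indic R C)^T.
Proof.
rewrite /EBC natr_card mxformE pair_bigA; apply: eq_bigr => -[u v] _.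
rewrite !mxE !inE /=.
by case: (u \in B); case: (v \in C); case: (adj u v);
  rewrite ?mulr0 ?mul0r ?mulr1.
Qed.

Lemma EBC_split B C : (EBC adj B C)%:R =
  mxform A (bulkpart B) (bulkpart C) + mxform A (cellproj B) (cellproj C).
Proof.
rewrite EBC_mxform !indic_bulkpart.
exact: mxform_ker_range_split _ _ adjmx_sym adjmx_cellmx
  (bulkpart_cellmx B) (bulkpart_cellmx C).
Qed.

Lemma mxform_cellproj B C : mxform A (cellproj B) (cellproj C) =
  \sum_(i < k) \sum_(j < k)
     Num.sqrt ((S i j * S j i)%:R / (#|V i| * #|V j|)%:R)
     * #|B :&: V i|%:R * #|C :&: V j|%:R.
Proof.
rewrite mxform_mulmx trmxK -mulmxA adjmx_cellmx mulmxA cellmx_gram mxformE.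
apply: eq_bigr => i _; apply: eq_bigr => j _.
by rewrite mul_diag_mx cell_weight_sqrt !mxE; field; rewrite !card_cell_neq0.
Qed.

Lemma mxform_bulkpart_bound (L : R) B C :
  (forall mu, bulk_eigenvalue adj cell mu -> `|mu| <= L) ->
  `|mxform A (bulkpart B) (bulkpart C)| <=
  L * Num.sqrt (mxform 1%:M (bulkpart B) (bulkpart B))
    * Num.sqrt (mxform 1%:M (bulkpart C) (bulkpart C)).
Proof.
move=> bulk_le; have bulkW X : (bulkpart X <= kermx cellmx)%MS.
  exact/sub_kermxP/bulkpart_cellmx.
have kerW_le mu (v : 'rV[R]_n) : v != 0 -> (v <= kermx cellmx)%MS ->
    v *m A = mu *: v -> `|mu| <= L.
  move=> v_neq0 vW vA; apply: bulk_le.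
  exact (kermx_cellmx_bulk_eigenvalue v_neq0 vW vA).
have quadW := sym_stable_quadform_bound adjmx_sym stablemx_kermx_cellmx kerW_le.
exact (sym_form_polar_bound adjmx_sym quadW (bulkW B) (bulkW C)).
Qed.

End EquitablePartition.

Theorem mainTheorem10 (R : rcfType) (n k : nat) (adj : rel 'I_n)
    (cell : 'I_n -> 'I_k) (S : 'I_k -> 'I_k -> nat) (lamB : R)
    (B C : {set 'I_n}) :
  simple_graph adj -> connected_graph adj ->
  S_regular adj cell S ->
  (k < n)%N ->
  is_lambda_B adj cell lamB ->
  `| (EBC adj B C)%:R -
     \sum_(i < k) \sum_(j < k)
        Num.sqrt ((S i j * S j i)%:R /
                  (#|cellset cell i| * #|cellset cell j|)%:R)
        * #|B :&: cellset cell i|%:R * #|C :&: cellset cell j|%:R |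
  <= lamB * Num.sqrt (#|B|%:R * #|C|%:R).
Proof.
move=> [adj_sym _] _ [cell_neq0 cell_degree] _ [[mu0 _ mu0E] lamB_max].
have lamB_ge0 : 0 <= lamB by rewrite -mu0E normr_ge0.
rewrite (EBC_split R adj_sym cell_neq0 cell_degree).
rewrite (mxform_cellproj R adj_sym cell_neq0 cell_degree) addrK.
have := mxform_bulkpart_bound adj_sym cell_neq0 cell_degree B C lamB_max.
move/le_trans; apply.
rewrite sqrtrM ?ler0n // -mulrA ler_wpM2l //.
by rewrite ler_pM ?sqrtr_ge0 ?ler_wsqrtr ?mxform_bulkpart_le.
Qed.
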